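(* Let $\omega\in\mathbb{R}$, let $f$ and $f_0=f'$ be as in the context, and let $T\in(1,t_m]$. Let $\rho>0$ and $v^i$ be $C^1$ on $[1,T)\times(\mathbb{R}^3\setminus\{0\})$ and solve $\partial_t\rho+\partial_i(\rho v^i)=0$ with $\rho|_{t=1}=\frac{\iota^3}{6\pi}(1+\beta\mathcal d(|\mathbf x|))$, and let $s\in C^1$ solve $$\partial_ts+v^i\partial_is=-\Big(\frac23+\omega\Big)\partial_i\check v^i+\frac{2\check v^ix_i}{|\mathbf x|^2},\qquad s|_{t=1}=\ln\Big(\frac{(1+\beta\mathcal d(|\mathbf x|))^{2/3+\omega}}{(1+\beta)^{\omega}}|\mathbf x|^2\Big),$$ where $\check v^i:=v^i-\big(\frac{2}{3t}-\frac{f_0}{3(1+f)}\big)x^i$. Assume every point of $[1,T)\times(\mathbb{R}^3\setminus\{0\})$ lies on an integral curve of $\partial_t+v^i\partial_i$ starting on $\{t=1\}$. Then, with $\varrho:=\rho/\mathring\rho-1$ and $\mathring\rho=\frac{\iota^3}{6\pi t^2}$, $$s=\ln\Big(t^{-4/3}\frac{(1+\varrho)^{2/3+\omega}}{(1+f)^{\omega}}|\mathbf x|^2\Big),\qquad\text{and hence}\qquad p=Ke^s\rho^{4/3}=Kt^{-4/3}\frac{(1+\varrho)^{2/3+\omega}}{(1+f)^{\omega}}|\mathbf x|^2\rho^{4/3}.$$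
   Context: $f\in C^2([1,t_m))$ solves $f''+\frac{4}{3t}f'-\frac{2}{3t^2}f(1+f)-\frac{4(f')^2}{3(1+f)}=0$, $f(1)=\beta>0$, $f'(1)=3(1+\beta)\gamma$, $\gamma>0$, on its maximal interval $[1,t_m)$; $K>0$ and $\iota\in(0,1)$ are constants; $\mathcal d:(0,\infty)\to\mathbb{R}$ with $1+\beta\mathcal d>0$; $|\mathbf x|^2=\delta_{kl}x^kx^l$, $x_i=\delta_{ij}x^j$, summation convention. *)

From Stdlib Require Import Reals.
From Coquelicot Require Import Coquelicot.
Open Scope R_scope.

Definition nrm2 (x1 x2 x3 : R) : R := x1 ^ 2 + x2 ^ 2 + x3 ^ 2.

Definition inD (T : Rbar) (t x1 x2 x3 : R) : Prop :=
  1 <= t /\ Rbar_lt (Finite t) T /\ nrm2 x1 x2 x3 <> 0.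

Definition is_deriv_in (a : R) (b : Rbar) (h : R -> R) (t l : R) : Prop :=
  filterlim (fun s => (h s - h t) / (s - t))
    (within (fun s => a <= s /\ Rbar_le (Finite s) b /\ s <> t) (locally t))
    (locally l).

(* derivative relative to [1, +oo): one-sided at t = 1, usual derivative for t > 1 *)
Definition is_deriv_ge1 (h : R -> R) (t l : R) : Prop :=
  is_deriv_in 1 p_infty h t l.

Definition cont_on_from1 (tm : Rbar) (h : R -> R) : Prop :=
  forall t, 1 <= t -> Rbar_lt (Finite t) tm ->
  forall eps, 0 < eps -> exists del, 0 < del /\
    forall s, 1 <= s -> Rbar_lt (Finite s) tm -> Rabs (s - t) < del ->
      Rabs (h s - h t) < eps.

Definition ode_sol (tm : Rbar) (beta gamma : R) (f f0 : R -> R) : Prop :=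
  exists f1 : R -> R,
    (forall t, 1 <= t -> Rbar_lt (Finite t) tm ->
       is_deriv_ge1 f t (f0 t) /\ is_deriv_ge1 f0 t (f1 t) /\ 1 + f t <> 0 /\
       f1 t + 4 / (3 * t) * f0 t - 2 / (3 * t ^ 2) * (f t * (1 + f t))
         - 4 * (f0 t) ^ 2 / (3 * (1 + f t)) = 0) /\
    cont_on_from1 tm f1 /\
    f 1 = beta /\ f0 1 = 3 * (1 + beta) * gamma.

Definition ode_maximal (tm : Rbar) (beta gamma : R) (f f0 : R -> R) : Prop :=
  ode_sol tm beta gamma f f0 /\
  forall (tm' : Rbar) (g g0 : R -> R), Rbar_lt tm tm' ->
    ode_sol tm' beta gamma g g0 ->
    (forall t, 1 <= t -> Rbar_lt (Finite t) tm -> g t = f t) -> False.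

(* fields on [1,T) x (R^3\{0}) are curried functions  g t x1 x2 x3 *)
Definition field := R -> R -> R -> R -> R.

Definition pd_t (g : field) t x1 x2 x3 l := is_deriv_ge1 (fun s => g s x1 x2 x3) t l.
Definition pd_1 (g : field) t x1 x2 x3 l := is_derive (fun y => g t y x2 x3) x1 l.
Definition pd_2 (g : field) t x1 x2 x3 l := is_derive (fun y => g t x1 y x3) x2 l.
Definition pd_3 (g : field) t x1 x2 x3 l := is_derive (fun y => g t x1 x2 y) x3 l.

Definition cont_on_D (T : Rbar) (g : field) : Prop :=
  forall t x1 x2 x3, inD T t x1 x2 x3 ->
  forall eps, 0 < eps -> exists del, 0 < del /\
    forall s y1 y2 y3, inD T s y1 y2 y3 ->
      Rabs (s - t) < del -> Rabs (y1 - x1) < del -> Rabs (y2 - x2) < del ->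
      Rabs (y3 - x3) < del ->
      Rabs (g s y1 y2 y3 - g t x1 x2 x3) < eps.

Definition C1_on_D (T : Rbar) (g : field) : Prop :=
  exists gt g1 g2 g3 : field,
    (forall t x1 x2 x3, inD T t x1 x2 x3 ->
       pd_t g t x1 x2 x3 (gt t x1 x2 x3) /\ pd_1 g t x1 x2 x3 (g1 t x1 x2 x3) /\
       pd_2 g t x1 x2 x3 (g2 t x1 x2 x3) /\ pd_3 g t x1 x2 x3 (g3 t x1 x2 x3)) /\
    cont_on_D T g /\ cont_on_D T gt /\ cont_on_D T g1 /\ cont_on_D T g2 /\
    cont_on_D T g3.

From Stdlib Require Import Reals Lra.
From Coquelicot Require Import Coquelicot.
Open Scope R_scope.

(** Let p = 2/3 + omega.  Along an integral curve c of d_t + v^i d_i, the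
    continuity equation gives (ln rho)' = -d_i v^i, the transport equation
    gives s' = -p (d_i v^i - 3 c) + 2 vcheck.x/|x|^2 with
    c = 2/(3t) - f'/(3(1+f)), and (ln|x|^2)' = 2 vcheck.x/|x|^2 + 2c.  Hence
    the "entropy defect"  s - p ln rho - 2 omega ln t + omega ln(1+f) - ln|x|^2
    has derivative 3 omega c - 2 omega/t + omega f'/(1+f) = 0, so it keeps its
    value -p ln(iota^3/(6 pi)) from t = 1; solving for s gives the formula. *)

Definition win (a b t : R) :=
  within (fun s => a <= s /\ Rbar_le (Finite s) (Finite b) /\ s <> t) (locally t).

Global Instance win_filter a b t : Filter (win a b t) :=
  within_filter _ _ _ (@filter_filter _ _ (locally_filter t)).

Lemma lim_of_eps {X} (F : (X -> Prop) -> Prop) {FF : Filter F} (g : X -> R) l :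
  (forall e, 0 < e -> F (fun x => Rabs (g x - l) < e)) -> filterlim g F (locally l).
Proof. intros H. apply filterlim_locally. intros [e He]. exact (H e He). Qed.

Lemma eps_of_lim {X} (F : (X -> Prop) -> Prop) {FF : Filter F} (g : X -> R) l :
  filterlim g F (locally l) -> forall e, 0 < e -> F (fun x => Rabs (g x - l) < e).
Proof. intros H e He. exact (proj1 (filterlim_locally g l) H (mkposreal e He)). Qed.

Lemma lim_plus {X} (F : (X -> Prop) -> Prop) {FF : Filter F} (g h : X -> R) a b :
  filterlim g F (locally a) -> filterlim h F (locally b) ->
  filterlim (fun x => g x + h x) F (locally (a + b)).
Proof.
  intros Hg Hh. exact (filterlim_comp_2 g h Rplus Hg Hh (@filterlim_plus R_AbsRing R_NormedModule a b)).
Qed.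

Lemma lim_mult {X} (F : (X -> Prop) -> Prop) {FF : Filter F} (g h : X -> R) a b :
  filterlim g F (locally a) -> filterlim h F (locally b) ->
  filterlim (fun x => g x * h x) F (locally (a * b)).
Proof. intros Hg Hh. exact (filterlim_comp_2 g h Rmult Hg Hh (@filterlim_mult R_AbsRing a b)). Qed.

Lemma win_elim a b t P : win a b t P ->
  exists d, 0 < d /\ forall s, a <= s <= b -> s <> t -> Rabs (s - t) < d -> P s.
Proof.
  intros [[d Hd] H]. exists d; split; auto.
  intros s Hs Hst Hd'. apply H; [exact Hd' | split; [lra | split; [simpl; lra | auto]]].
Qed.

Lemma win_intro a b t (P : R -> Prop) :
  (exists d, 0 < d /\ forall s, a <= s <= b -> s <> t -> Rabs (s - t) < d -> P s) -> win a b t P.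
Proof.
  intros [d [Hd H]]. exists (mkposreal d Hd). intros s Hb [H1 [H2 H3]]. simpl in H2. apply H; auto.
Qed.

Lemma win_dom a b t : win a b t (fun s => a <= s <= b /\ s <> t).
Proof. apply win_intro. exists 1. split; [lra | auto]. Qed.

Lemma win_id a b t : filterlim (fun s => s) (win a b t) (locally t).
Proof.
  apply (lim_of_eps (win a b t) (fun s => s)). intros e He.
  apply win_intro. exists e. split; auto.
Qed.

Lemma deriv_in_ext a b (h k : R -> R) t l l' : (forall s, h s = k s) -> l = l' ->
  is_deriv_in a (Finite b) h t l -> is_deriv_in a (Finite b) k t l'.
Proof.
  intros Hhk <- H. eapply filterlim_ext; [|exact H]. intros s; simpl. rewrite !Hhk. reflexivity.
Qed.

Lemma deriv_in_plus a b (h k : R -> R) t l m :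
  is_deriv_in a (Finite b) h t l -> is_deriv_in a (Finite b) k t m ->
  is_deriv_in a (Finite b) (fun s => h s + k s) t (l + m).
Proof.
  intros H1 H2. eapply filterlim_ext; [|exact (lim_plus (win a b t) _ _ _ _ H1 H2)].
  intros s; simpl. unfold Rdiv; ring.
Qed.

Lemma deriv_in_scal a b (h : R -> R) k t l : is_deriv_in a (Finite b) h t l ->
  is_deriv_in a (Finite b) (fun s => k * h s) t (k * l).
Proof.
  intros H. eapply filterlim_ext; [|exact (lim_mult (win a b t) _ _ _ _ (filterlim_const k) H)].
  intros s; simpl. unfold Rdiv; ring.
Qed.

Lemma deriv_in_const a b k t : is_deriv_in a (Finite b) (fun _ => k) t 0.
Proof.
  eapply filterlim_ext; [|exact (filterlim_const (F := win a b t) 0)].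
  intros s; simpl. unfold Rdiv; ring.
Qed.

Lemma deriv_in_minus a b (h k : R -> R) t l m :
  is_deriv_in a (Finite b) h t l -> is_deriv_in a (Finite b) k t m ->
  is_deriv_in a (Finite b) (fun s => h s - k s) t (l - m).
Proof.
  intros H1 H2. eapply deriv_in_ext; [| |exact (deriv_in_plus _ _ _ _ _ _ _ H1 (deriv_in_scal _ _ _ (-1) _ _ H2))].
  - intros s. simpl. ring.
  - ring.
Qed.

Lemma deriv_in_id a b t : is_deriv_in a (Finite b) (fun s => s) t 1.
Proof.
  eapply filterlim_ext_loc; [|exact (filterlim_const (F := win a b t) 1)].
  generalize (win_dom a b t). apply filter_imp. intros s [_ Hs]. simpl. field. lra.
Qed.

Lemma deriv_in_restrict a (b b' : Rbar) h t l :
  (forall s, Rbar_le (Finite s) b -> Rbar_le (Finite s) b') ->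
  is_deriv_in a b' h t l -> is_deriv_in a b h t l.
Proof.
  intros Hb H. eapply filterlim_filter_le_1; [|exact H].
  intros P HP. unfold within in *. eapply filter_imp; [|exact HP]. simpl.
  intros x Hx [H1 [H2 H3]]. apply Hx. repeat split; auto. apply (Hb x H2).
Qed.

Lemma deriv_in_cont a b h t l : is_deriv_in a (Finite b) h t l ->
  forall e, 0 < e -> exists d, 0 < d /\
    forall s, a <= s <= b -> Rabs (s - t) < d -> Rabs (h s - h t) < e.
Proof.
  intros H e He.
  destruct (win_elim _ _ _ _ (eps_of_lim _ _ _ H 1 Rlt_0_1)) as [d0 [Hd0 H0]].
  assert (Hl : 0 < Rabs l + 1) by (pose proof (Rabs_pos l); lra).
  exists (Rmin d0 (e / (Rabs l + 1))). split.
  { apply Rmin_pos; auto. apply Rdiv_lt_0_compat; auto. }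
  intros s Hs Hst. destruct (Req_dec s t) as [->|Hne].
  { replace (h t - h t) with 0 by ring. rewrite Rabs_R0; auto. }
  assert (Hm1 := Rmin_l d0 (e / (Rabs l + 1))). assert (Hm2 := Rmin_r d0 (e / (Rabs l + 1))).
  specialize (H0 s Hs Hne ltac:(lra)). simpl in H0.
  set (q := (h s - h t) / (s - t)) in *.
  assert (Hq : h s - h t = q * (s - t)) by (unfold q; field; lra).
  rewrite Hq, Rabs_mult.
  assert (Rabs q < Rabs l + 1) by (pose proof (Rabs_triang_inv q l); lra).
  assert (e / (Rabs l + 1) * (Rabs l + 1) = e) by (field; lra).
  pose proof (Rabs_pos q). pose proof (Rabs_pos (s - t)). nra.
Qed.

Lemma deriv_in_lim a b h t l :
  is_deriv_in a (Finite b) h t l -> filterlim h (win a b t) (locally (h t)).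
Proof.
  intros H. apply (lim_of_eps (win a b t) h). intros e He. apply win_intro.
  destruct (deriv_in_cont _ _ _ _ _ H e He) as [d [Hd Hc]]. exists d; split; auto.
Qed.

Lemma deriv_in_comp (a b : R) (g h : R -> R) (t gp l : R) :
  is_derive g (h t) gp -> is_deriv_in a (Finite b) h t l ->
  is_deriv_in a (Finite b) (fun s => g (h s)) t (gp * l).
Proof.
  intros Hg H.
  (* the difference quotient of g, extended continuously at h t *)
  set (phi := fun y => if Req_EM_T y (h t) then gp else (g y - g (h t)) / (y - h t)).
  assert (Hphi : filterlim phi (locally (h t)) (locally gp)).
  { apply (lim_of_eps (locally (h t)) phi). intros e He.
    apply is_derive_Reals in Hg. destruct (Hg e He) as [d Hd].
    exists d. intros y Hy. change (Rabs (y - h t) < d) in Hy. unfold phi.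
    destruct Req_EM_T as [E|E].
    - replace (gp - gp) with 0 by ring. rewrite Rabs_R0; auto.
    - specialize (Hd (y - h t) ltac:(lra) Hy). rewrite Rplus_minus in Hd. exact Hd. }
  eapply filterlim_ext_loc.
  2: exact (lim_mult (win a b t) _ _ _ _
              (filterlim_comp _ _ _ _ _ _ _ _ (deriv_in_lim _ _ _ _ _ H) Hphi) H).
  generalize (win_dom a b t). apply filter_imp. intros s [_ Hs]. unfold phi.
  destruct Req_EM_T as [E|E].
  - simpl. rewrite E. unfold Rdiv; ring.
  - simpl. field. lra.
Qed.

Lemma deriv_in_ln a b h t l :
  is_deriv_in a (Finite b) h t l -> 0 < h t -> is_deriv_in a (Finite b) (fun s => ln (h s)) t (l / h t).
Proof.
  intros H Hpos. eapply deriv_in_ext; [reflexivity| |exact (deriv_in_comp _ _ ln h t _ _ (is_derive_ln _ Hpos) H)].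
  unfold Rdiv; ring.
Qed.

(** Projection of R onto [a,b]; composing with it turns functions continuous
    on [a,b] into functions continuous on R, so that [MVT_gen]/[IVT_gen] apply. *)
Definition clamp a b u := Rmax a (Rmin b u).

Lemma clamp_in a b u : a <= b -> a <= clamp a b u <= b.
Proof. intros. unfold clamp, Rmax, Rmin. repeat destruct Rle_dec; lra. Qed.

Lemma clamp_id a b u : a <= u <= b -> clamp a b u = u.
Proof. intros. unfold clamp, Rmax, Rmin. repeat destruct Rle_dec; lra. Qed.

Lemma clamp_lip a b u v : a <= b -> Rabs (clamp a b u - clamp a b v) <= Rabs (u - v).
Proof.
  intros. unfold clamp, Rmax, Rmin. repeat destruct Rle_dec; unfold Rabs; repeat destruct Rcase_abs; lra.
Qed.

Lemma clamp_continuity a b h : a <= b ->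
  (forall t, a <= t <= b -> exists l, is_deriv_in a (Finite b) h t l) ->
  continuity (fun u => h (clamp a b u)).
Proof.
  intros Hab HD x. unfold continuity_pt, continue_in, limit1_in, limit_in. simpl. unfold R_dist.
  intros e He. destruct (HD (clamp a b x) (clamp_in a b x Hab)) as [l Hl].
  destruct (deriv_in_cont _ _ _ _ _ Hl e He) as [d [Hd H]].
  exists d. split; auto. intros y [_ Hy]. apply H; [apply clamp_in; auto|].
  pose proof (clamp_lip a b y x Hab). lra.
Qed.

Lemma deriv_in_zero_const a b h : a <= b ->
  (forall t, a <= t <= b -> is_deriv_in a (Finite b) h t 0) -> h b = h a.
Proof.
  intros Hab HD.
  assert (Hc : continuity (fun u => h (clamp a b u))).
  { apply clamp_continuity; auto. intros t Ht; exists 0; auto. }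
  pose proof (MVT_gen (fun u => h (clamp a b u)) a b (fun _ => 0)) as HM. cbv zeta in HM.
  rewrite Rmin_left, Rmax_right in HM by lra.
  destruct HM as [c [Hc' Heq]].
  - (* in the interior, the relative derivative is the ordinary one *)
    intros x Hx. apply is_derive_Reals. intros e He.
    destruct (win_elim _ _ _ _ (eps_of_lim (win a b x) _ _ (HD x ltac:(lra)) e He)) as [d0 [Hd0 H0]].
    assert (Hpos : 0 < Rmin d0 (Rmin (x - a) (b - x))) by (repeat apply Rmin_pos; lra).
    exists (mkposreal _ Hpos). intros k Hk0 Hk. simpl in Hk.
    assert (Hm1 := Rmin_l d0 (Rmin (x - a) (b - x))). assert (Hm2 := Rmin_r d0 (Rmin (x - a) (b - x))).
    assert (Hm3 := Rmin_l (x - a) (b - x)). assert (Hm4 := Rmin_r (x - a) (b - x)).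
    apply Rabs_def2 in Hk as Hk'. rewrite !clamp_id by lra.
    specialize (H0 (x + k) ltac:(lra) ltac:(lra)). replace (x + k - x) with k in H0 by ring.
    apply H0. replace (x + k - x) with k by ring. lra.
  - intros x Hx. apply Hc.
  - rewrite !clamp_id in Heq by lra. lra.
Qed.

Lemma nonvanishing_pos a b h : a <= b ->
  (forall t, a <= t <= b -> exists l, is_deriv_in a (Finite b) h t l) ->
  (forall t, a <= t <= b -> h t <> 0) -> 0 < h a -> forall t, a <= t <= b -> 0 < h t.
Proof.
  intros Hab HD Hnz Ha t Ht. destruct (Rlt_or_le 0 (h t)) as [|Hle]; auto. exfalso.
  destruct (IVT_gen _ a t 0 (clamp_continuity a b h Hab HD)) as [x [Hx Hx0]].
  - rewrite !clamp_id by lra. unfold Rmin, Rmax; destruct Rle_dec; lra.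
  - rewrite Rmin_left, Rmax_right in Hx by lra. rewrite clamp_id in Hx0 by lra.
    apply (Hnz x); lra.
Qed.

Lemma Rbar_lt_of_le (s b : R) (T : Rbar) : s <= b -> Rbar_lt (Finite b) T -> Rbar_lt (Finite s) T.
Proof. intros H1 H2. destruct T; simpl in *; auto; lra. Qed.

Lemma derive_unique (h : R -> R) x l l' : is_derive h x l -> is_derive h x l' -> l = l'.
Proof. intros H H'. rewrite <- (is_derive_unique _ _ _ H), (is_derive_unique _ _ _ H'). reflexivity. Qed.

Lemma nrm2_pos y1 y2 y3 : nrm2 y1 y2 y3 <> 0 -> 0 < nrm2 y1 y2 y3.
Proof.
  intros H. unfold nrm2 in *.
  pose proof (pow2_ge_0 y1). pose proof (pow2_ge_0 y2). pose proof (pow2_ge_0 y3). lra.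
Qed.

Lemma nrm2_nonzero_near x1 x2 x3 : nrm2 x1 x2 x3 <> 0 -> exists r, 0 < r /\ forall y1 y2 y3,
  Rabs (y1 - x1) < r -> Rabs (y2 - x2) < r -> Rabs (y3 - x3) < r -> nrm2 y1 y2 y3 <> 0.
Proof.
  intros H. unfold nrm2 in *.
  assert (Hy : forall y x, x <> 0 -> Rabs (y - x) < Rabs x -> 0 < y ^ 2).
  { intros y x Hx Hyx. apply pow2_gt_0. intros ->. rewrite Rminus_0_l, Rabs_Ropp in Hyx. lra. }
  pose proof pow2_ge_0 as P.
  destruct (Req_dec x1 0) as [E1|E1];
    [destruct (Req_dec x2 0) as [E2|E2]; [destruct (Req_dec x3 0) as [E3|E3]|]|].
  - exfalso; apply H; subst; ring.
  - exists (Rabs x3). split; [apply Rabs_pos_lt; auto|]. intros y1 y2 y3 _ _ H3.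
    specialize (Hy _ _ E3 H3). pose proof (P y1); pose proof (P y2). lra.
  - exists (Rabs x2). split; [apply Rabs_pos_lt; auto|]. intros y1 y2 y3 _ H2 _.
    specialize (Hy _ _ E2 H2). pose proof (P y1); pose proof (P y3). lra.
  - exists (Rabs x1). split; [apply Rabs_pos_lt; auto|]. intros y1 y2 y3 H1 _ _.
    specialize (Hy _ _ E1 H1). pose proof (P y2); pose proof (P y3). lra.
Qed.

Lemma inD_swap12 T t x y z : inD T t x y z -> inD T t y x z.
Proof. intros [H1 [H2 H3]]. repeat split; auto. unfold nrm2 in *. lra. Qed.

Lemma inD_rot3 T t x y z : inD T t x y z -> inD T t y z x.
Proof. intros [H1 [H2 H3]]. repeat split; auto. unfold nrm2 in *. lra. Qed.

Definition swap12 (g : field) : field := fun t u w z => g t w u z.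
Definition rot3 (g : field) : field := fun t u w z => g t w z u.

Lemma cont_on_D_swap12 T g : cont_on_D T g -> cont_on_D T (swap12 g).
Proof.
  intros Hc t u w z H e He.
  destruct (Hc t w u z (inD_swap12 _ _ _ _ _ H) e He) as [d [Hd Hd']].
  exists d. split; auto. intros s y1 y2 y3 Hs ? ? ? ?. apply Hd'; auto. apply inD_swap12; exact Hs.
Qed.

Lemma cont_on_D_rot3 T g : cont_on_D T g -> cont_on_D T (rot3 g).
Proof.
  intros Hc t u w z H e He.
  destruct (Hc t w z u (inD_rot3 _ _ _ _ _ H) e He) as [d [Hd Hd']].
  exists d. split; auto. intros s y1 y2 y3 Hs ? ? ? ?. apply Hd'; auto. apply inD_rot3; exact Hs.
Qed.

Lemma between_abs u u' y x0 d : Rmin u u' <= y <= Rmax u u' ->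
  Rabs (u - x0) < d -> Rabs (u' - x0) < d -> Rabs (y - x0) < d.
Proof.
  intros Hy H1 H2. apply Rabs_def2 in H1. apply Rabs_def2 in H2.
  apply Rabs_def1; unfold Rmin, Rmax in Hy; destruct Rle_dec; lra.
Qed.

(** Mean value theorem in the first spatial variable: near a point of the
    domain, the difference quotient of G in that variable is close to the
    (jointly continuous) partial derivative at the point. *)
Lemma partial_slope_close (T : Rbar) (G G1 : field) (tau x0 w0 z0 : R) :
  inD T tau x0 w0 z0 ->
  (forall s u w z, inD T s u w z -> pd_1 G s u w z (G1 s u w z)) -> cont_on_D T G1 ->
  forall e, 0 < e -> exists d, 0 < d /\ forall s u w z, 1 <= s -> Rbar_lt (Finite s) T ->
    Rabs (s - tau) < d -> Rabs (u - x0) < d -> Rabs (w - w0) < d -> Rabs (z - z0) < d -> u <> x0 ->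
    Rabs ((G s u w z - G s x0 w z) / (u - x0) - G1 tau x0 w0 z0) < e.
Proof.
  intros HD HG HC e He. destruct HD as [H1 [H2 Hnz]].
  destruct (nrm2_nonzero_near _ _ _ Hnz) as [r [Hr Hbox]].
  destruct (HC tau x0 w0 z0 (conj H1 (conj H2 Hnz)) e He) as [d1 [Hd1 Hc1]].
  exists (Rmin d1 r). split; [apply Rmin_pos; auto|].
  intros s u w z Hs1 HsT Hs Hu Hw Hz Hux.
  assert (Hm1 := Rmin_l d1 r); assert (Hm2 := Rmin_r d1 r).
  assert (Hx0 : Rabs (x0 - x0) < Rmin d1 r) by (rewrite Rminus_eq_0, Rabs_R0; apply Rmin_pos; auto).
  assert (Hseg : forall y, Rmin x0 u <= y <= Rmax x0 u ->
                   inD T s y w z /\ Rabs (y - x0) < Rmin d1 r).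
  { intros y Hy. pose proof (between_abs _ _ _ _ _ Hy Hx0 Hu).
    split; [split; [lra | split; [auto | apply Hbox; lra]] | auto]. }
  destruct (MVT_gen (fun y => G s y w z) x0 u (fun y => G1 s y w z)) as [xi [Hxi Heq]].
  - intros y Hy. apply HG, Hseg. lra.
  - intros y Hy. apply continuity_pt_filterlim, (ex_derive_continuous (fun y => G s y w z)).
    eexists; apply HG, Hseg; auto.
  - replace ((G s u w z - G s x0 w z) / (u - x0)) with (G1 s xi w z)
      by (rewrite Heq; field; intro; apply Hux; lra).
    destruct (Hseg xi Hxi). apply Hc1; auto; lra.
Qed.

Lemma partial_slope_lim (T : Rbar) (b tau : R) (G G1 : field) (x0 w0 z0 : R) (U W Z : R -> R) :
  Rbar_lt (Finite b) T -> 1 <= tau <= b -> nrm2 x0 w0 z0 <> 0 ->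
  (forall s u w z, inD T s u w z -> pd_1 G s u w z (G1 s u w z)) -> cont_on_D T G1 ->
  filterlim U (win 1 b tau) (locally x0) -> filterlim W (win 1 b tau) (locally w0) ->
  filterlim Z (win 1 b tau) (locally z0) ->
  filterlim (fun s => if Req_EM_T (U s) x0 then G1 tau x0 w0 z0
                      else (G s (U s) (W s) (Z s) - G s x0 (W s) (Z s)) / (U s - x0))
    (win 1 b tau) (locally (G1 tau x0 w0 z0)).
Proof.
  intros HbT Htau Hnz HG HC HU HW HZ. apply (lim_of_eps (win 1 b tau)). intros e He.
  assert (HD : inD T tau x0 w0 z0) by (repeat split; auto; [lra | apply (Rbar_lt_of_le tau b); lra || auto]).
  destruct (partial_slope_close T G G1 tau x0 w0 z0 HD HG HC e He) as [d [Hd Hs]].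
  assert (HS : win 1 b tau (fun s => 1 <= s /\ Rbar_lt (Finite s) T)).
  { apply win_intro. exists 1. split; [lra|]. intros s Hs' _ _.
    split; [lra | apply (Rbar_lt_of_le s b); auto; lra]. }
  generalize (filter_and _ _ HS (filter_and _ _ (eps_of_lim _ _ _ HU d Hd)
    (filter_and _ _ (eps_of_lim _ _ _ HW d Hd) (filter_and _ _ (eps_of_lim _ _ _ HZ d Hd)
      (eps_of_lim _ _ _ (win_id 1 b tau) d Hd))))).
  apply filter_imp. intros s [[HS1 HS2] [F1 [F2 [F3 F4]]]].
  destruct Req_EM_T as [E|E].
  - rewrite Rminus_eq_0, Rabs_R0; auto.
  - apply Hs; auto.
Qed.

Lemma slope_mul (F : R -> R) (u x0 k D : R) : D <> 0 ->
  (if Req_EM_T u x0 then k else (F u - F x0) / (u - x0)) * ((u - x0) / D) = (F u - F x0) / D.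
Proof.
  intros HD. destruct Req_EM_T as [E|E].
  - subst. unfold Rdiv; ring.
  - field. split; auto. intro; apply E; lra.
Qed.

(** The increment is split into one
    time increment and three coordinate increments, each handled by
    [partial_slope_lim]. *)
Lemma chain_along_curve (T : Rbar) (b : R) (g : field) (c1 c2 c3 : R -> R)
  (tau A G1 G2 G3 d1 d2 d3 : R) :
  C1_on_D T g -> Rbar_lt (Finite b) T -> 1 <= tau <= b ->
  nrm2 (c1 tau) (c2 tau) (c3 tau) <> 0 ->
  pd_t g tau (c1 tau) (c2 tau) (c3 tau) A ->
  pd_1 g tau (c1 tau) (c2 tau) (c3 tau) G1 ->
  pd_2 g tau (c1 tau) (c2 tau) (c3 tau) G2 ->
  pd_3 g tau (c1 tau) (c2 tau) (c3 tau) G3 ->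
  is_deriv_in 1 (Finite b) c1 tau d1 -> is_deriv_in 1 (Finite b) c2 tau d2 ->
  is_deriv_in 1 (Finite b) c3 tau d3 ->
  is_deriv_in 1 (Finite b) (fun s => g s (c1 s) (c2 s) (c3 s)) tau
    (G1 * d1 + G2 * d2 + G3 * d3 + A).
Proof.
  intros [gt [g1 [g2 [g3 [Hpd [_ [_ [Hc1 [Hc2 Hc3]]]]]]]]] HbT Htau Hnz Ht HG1 HG2 HG3 Hd1 Hd2 Hd3.
  set (x1 := c1 tau) in *. set (x2 := c2 tau) in *. set (x3 := c3 tau) in *.
  assert (HD : inD T tau x1 x2 x3) by (repeat split; auto; [lra | apply (Rbar_lt_of_le tau b); lra || auto]).
  destruct (Hpd tau x1 x2 x3 HD) as [_ [P1 [P2 P3]]].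
  rewrite (derive_unique _ _ _ _ HG1 P1), (derive_unique _ _ _ _ HG2 P2), (derive_unique _ _ _ _ HG3 P3).
  assert (Lc1 := deriv_in_lim _ _ _ _ _ Hd1). assert (Lc2 := deriv_in_lim _ _ _ _ _ Hd2).
  assert (Lc3 := deriv_in_lim _ _ _ _ _ Hd3).
  assert (L1 := partial_slope_lim T b tau g g1 x1 x2 x3 c1 c2 c3 HbT Htau Hnz
    (fun s u w z H => proj1 (proj2 (Hpd s u w z H))) Hc1 Lc1 Lc2 Lc3).
  assert (L2 := partial_slope_lim T b tau (swap12 g) (swap12 g2) x2 x1 x3 c2 (fun _ => x1) c3 HbT Htau
    ltac:(unfold nrm2 in *; intro; apply Hnz; lra)
    (fun s u w z H => proj1 (proj2 (proj2 (Hpd s w u z (inD_swap12 _ _ _ _ _ H)))))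
    (cont_on_D_swap12 _ _ Hc2) Lc2 (filterlim_const x1) Lc3).
  assert (L3 := partial_slope_lim T b tau (rot3 g) (rot3 g3) x3 x1 x2 c3 (fun _ => x1) (fun _ => x2) HbT Htau
    ltac:(unfold nrm2 in *; intro; apply Hnz; lra)
    (fun s u w z H => proj2 (proj2 (proj2 (Hpd s w z u (inD_rot3 _ _ _ _ _ H)))))
    (cont_on_D_rot3 _ _ Hc3) Lc3 (filterlim_const x1) (filterlim_const x2)).
  assert (L4 : is_deriv_in 1 (Finite b) (fun s => g s x1 x2 x3) tau A)
    by (eapply deriv_in_restrict; [|exact Ht]; intros; simpl; auto).
  unfold swap12, rot3 in L2, L3. simpl in L1, L2, L3.
  eapply filterlim_ext_loc.
  2: exact (lim_plus _ _ _ _ _ (lim_plus _ _ _ _ _ (lim_plus _ _ _ _ _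
             (lim_mult _ _ _ _ _ L1 Hd1) (lim_mult _ _ _ _ _ L2 Hd2)) (lim_mult _ _ _ _ _ L3 Hd3)) L4).
  generalize (win_dom 1 b tau). apply filter_imp. intros s [_ Hs]. simpl.
  assert (Hne : s - tau <> 0) by lra. fold x1 x2 x3.
  rewrite (slope_mul (fun y => g s y (c2 s) (c3 s)) (c1 s) x1 (g1 tau x1 x2 x3) (s - tau) Hne),
    (slope_mul (fun y => g s x1 y (c3 s)) (c2 s) x2 (g2 tau x1 x2 x3) (s - tau) Hne),
    (slope_mul (fun y => g s x1 x2 y) (c3 s) x3 (g3 tau x1 x2 x3) (s - tau) Hne).
  unfold x1, x2, x3. unfold Rdiv; ring.
Qed.

Lemma Rpower_pos x y : 0 < Rpower x y.
Proof. apply exp_pos. Qed.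

Lemma ode_f_deriv (tm : Rbar) beta gamma f f0 (t tau : R) :
  ode_sol tm beta gamma f f0 -> Rbar_lt (Finite t) tm -> 1 <= tau <= t ->
  is_deriv_in 1 (Finite t) f tau (f0 tau).
Proof.
  intros [f1 [Hf _]] Ht Htau.
  destruct (Hf tau ltac:(lra) (Rbar_lt_of_le tau t tm ltac:(lra) Ht)) as [H _].
  eapply deriv_in_restrict; [|exact H]. intros; simpl; auto.
Qed.

(** 1 + f never vanishes on the existence interval and equals 1 + beta > 0 at t = 1,
    hence it stays positive. *)
Lemma ode_one_plus_f_pos (tm : Rbar) beta gamma f f0 (t : R) :
  ode_sol tm beta gamma f f0 -> 0 < beta -> 1 <= t -> Rbar_lt (Finite t) tm ->
  forall tau, 1 <= tau <= t -> 0 < 1 + f tau.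
Proof.
  intros Hsol Hb Ht1 Ht. apply (nonvanishing_pos 1 t (fun tau => 1 + f tau)); [lra | | |].
  - intros tau Htau. eexists.
    exact (deriv_in_plus _ _ _ _ _ _ _ (deriv_in_const 1 t 1 tau) (ode_f_deriv _ _ _ _ _ _ _ Hsol Ht Htau)).
  - intros tau Htau. destruct Hsol as [f1 [Hf _]].
    exact (proj1 (proj2 (proj2 (Hf tau ltac:(lra) (Rbar_lt_of_le tau t tm ltac:(lra) Ht))))).
  - destruct Hsol as [f1 [_ [_ [-> _]]]]. lra.
Qed.

Lemma deriv_in_nrm2 a b (c1 c2 c3 : R -> R) tau d1 d2 d3 :
  is_deriv_in a (Finite b) c1 tau d1 -> is_deriv_in a (Finite b) c2 tau d2 ->
  is_deriv_in a (Finite b) c3 tau d3 ->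
  is_deriv_in a (Finite b) (fun s => nrm2 (c1 s) (c2 s) (c3 s)) tau
    (2 * c1 tau * d1 + 2 * c2 tau * d2 + 2 * c3 tau * d3).
Proof.
  assert (Hsq : forall y, is_derive (fun y => y ^ 2) y (2 * y)) by (intros y; auto_derive; auto; ring).
  intros H1 H2 H3. eapply deriv_in_ext; [intros; reflexivity | |
    exact (deriv_in_plus _ _ _ _ _ _ _ (deriv_in_plus _ _ _ _ _ _ _
      (deriv_in_comp _ _ _ _ _ _ _ (Hsq _) H1) (deriv_in_comp _ _ _ _ _ _ _ (Hsq _) H2))
      (deriv_in_comp _ _ _ _ _ _ _ (Hsq _) H3))].
  ring.
Qed.

Lemma is_derive_minus_linear (h : R -> R) x c l :
  is_derive h x l -> is_derive (fun y => h y - c * y) x (l - c).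
Proof.
  intros H. replace (l - c) with (l - c * 1) by ring.
  exact (is_derive_minus _ _ _ _ _ H (is_derive_scal _ _ c _ (is_derive_id x))).
Qed.

Lemma C1_spatial_partials T (g : field) t x1 x2 x3 : C1_on_D T g -> inD T t x1 x2 x3 ->
  exists g1 g2 g3, pd_1 g t x1 x2 x3 g1 /\ pd_2 g t x1 x2 x3 g2 /\ pd_3 g t x1 x2 x3 g3.
Proof.
  intros [gt [g1 [g2 [g3 [Hpd _]]]]] HD. destruct (Hpd t x1 x2 x3 HD) as [_ [H1 [H2 H3]]].
  exists (g1 t x1 x2 x3), (g2 t x1 x2 x3), (g3 t x1 x2 x3). auto.
Qed.

(** Pointwise algebra behind the conservation law: if the continuity equation
    and the transport equation for s hold at a point, then the rate of change
    of s - p ln rho - 2 omega ln t + omega ln(1+f) - ln|x|^2 along the flow,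
    with p = 2/3 + omega, vanishes.  Here w is the velocity, q_i = d_i v^i,
    r_i = d_i rho, g_i = d_i s, and ar, as_ are the time derivatives. *)
Lemma entropy_balance (tau omega fv f0v y1 y2 y3 w1 w2 w3 q1 q2 q3 r r1 r2 r3 ar g1 g2 g3 as_ : R) :
  0 < tau -> 0 < r -> 0 < 1 + fv -> nrm2 y1 y2 y3 <> 0 ->
  ar + (r1 * w1 + r * q1) + (r2 * w2 + r * q2) + (r3 * w3 + r * q3) = 0 ->
  (let c := 2 / (3 * tau) - f0v / (3 * (1 + fv)) in
   as_ + (w1 * g1 + w2 * g2 + w3 * g3)
   = - (2 / 3 + omega) * (q1 - c + (q2 - c) + (q3 - c))
     + 2 * ((w1 - c * y1) * y1 + (w2 - c * y2) * y2 + (w3 - c * y3) * y3) / nrm2 y1 y2 y3) ->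
  g1 * w1 + g2 * w2 + g3 * w3 + as_ - (2 / 3 + omega) * ((r1 * w1 + r2 * w2 + r3 * w3 + ar) / r)
  - 2 * omega * (1 / tau) + omega * (f0v / (1 + fv))
  - (2 * y1 * w1 + 2 * y2 * w2 + 2 * y3 * w3) / nrm2 y1 y2 y3 = 0.
Proof.
  intros Ht Hr Hf Hn Hcont Hent. cbv zeta in Hent.
  set (c := 2 / (3 * tau) - f0v / (3 * (1 + fv))) in Hent.
  assert (Ear : ar = - (r1 * w1 + r * q1 + (r2 * w2 + r * q2) + (r3 * w3 + r * q3))) by lra.
  assert (Eas : as_ = - (w1 * g1 + w2 * g2 + w3 * g3) - (2 / 3 + omega) * (q1 + q2 + q3 - 3 * c)
    + 2 * ((w1 - c * y1) * y1 + (w2 - c * y2) * y2 + (w3 - c * y3) * y3) / nrm2 y1 y2 y3) by lra.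
  rewrite Ear, Eas. unfold c, nrm2 in *. field. repeat split; lra.
Qed.

Section Characteristics.

Variables (omega : R) (T : Rbar) (f f0 : R -> R) (rho v1 v2 v3 s : field).

Hypotheses (rho_C1 : C1_on_D T rho) (v1_C1 : C1_on_D T v1) (v2_C1 : C1_on_D T v2)
  (v3_C1 : C1_on_D T v3) (s_C1 : C1_on_D T s).

Hypothesis rho_pos : forall t x1 x2 x3, inD T t x1 x2 x3 -> 0 < rho t x1 x2 x3.

Hypothesis continuity_eq : forall t x1 x2 x3, inD T t x1 x2 x3 ->
  exists a b1 b2 b3,
    pd_t rho t x1 x2 x3 a /\
    pd_1 (fun t y1 y2 y3 => rho t y1 y2 y3 * v1 t y1 y2 y3) t x1 x2 x3 b1 /\
    pd_2 (fun t y1 y2 y3 => rho t y1 y2 y3 * v2 t y1 y2 y3) t x1 x2 x3 b2 /\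
    pd_3 (fun t y1 y2 y3 => rho t y1 y2 y3 * v3 t y1 y2 y3) t x1 x2 x3 b3 /\
    a + b1 + b2 + b3 = 0.

Hypothesis entropy_eq :
  let c t := 2 / (3 * t) - f0 t / (3 * (1 + f t)) in
  let vc1 : field := fun t y1 y2 y3 => v1 t y1 y2 y3 - c t * y1 in
  let vc2 : field := fun t y1 y2 y3 => v2 t y1 y2 y3 - c t * y2 in
  let vc3 : field := fun t y1 y2 y3 => v3 t y1 y2 y3 - c t * y3 in
  forall t x1 x2 x3, inD T t x1 x2 x3 ->
    exists a c1 c2 c3 e1 e2 e3,
      pd_t s t x1 x2 x3 a /\
      pd_1 s t x1 x2 x3 c1 /\ pd_2 s t x1 x2 x3 c2 /\ pd_3 s t x1 x2 x3 c3 /\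
      pd_1 vc1 t x1 x2 x3 e1 /\ pd_2 vc2 t x1 x2 x3 e2 /\ pd_3 vc3 t x1 x2 x3 e3 /\
      a + (v1 t x1 x2 x3 * c1 + v2 t x1 x2 x3 * c2 + v3 t x1 x2 x3 * c3)
      = - (2 / 3 + omega) * (e1 + e2 + e3)
        + 2 * (vc1 t x1 x2 x3 * x1 + vc2 t x1 x2 x3 * x2 + vc3 t x1 x2 x3 * x3)
            / nrm2 x1 x2 x3.

(** The quantity conserved along a curve c: it differs from the claimed
    closed form for s only by the constant -(2/3 + omega) ln(rho_ring t^2). *)
Definition entropy_defect (c1 c2 c3 : R -> R) (tau : R) : R :=
  s tau (c1 tau) (c2 tau) (c3 tau) - (2 / 3 + omega) * ln (rho tau (c1 tau) (c2 tau) (c3 tau))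
  - 2 * omega * ln tau + omega * ln (1 + f tau) - ln (nrm2 (c1 tau) (c2 tau) (c3 tau)).

Lemma entropy_defect_stationary (t : R) (c1 c2 c3 : R -> R) (tau : R) :
  Rbar_lt (Finite t) T -> 1 <= tau <= t -> nrm2 (c1 tau) (c2 tau) (c3 tau) <> 0 ->
  is_deriv_in 1 (Finite t) c1 tau (v1 tau (c1 tau) (c2 tau) (c3 tau)) ->
  is_deriv_in 1 (Finite t) c2 tau (v2 tau (c1 tau) (c2 tau) (c3 tau)) ->
  is_deriv_in 1 (Finite t) c3 tau (v3 tau (c1 tau) (c2 tau) (c3 tau)) ->
  is_deriv_in 1 (Finite t) f tau (f0 tau) -> 0 < 1 + f tau ->
  is_deriv_in 1 (Finite t) (entropy_defect c1 c2 c3) tau 0.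
Proof.
  intros HtT Htau Hnz Hc1 Hc2 Hc3 Hf Hfpos.
  assert (HD : inD T tau (c1 tau) (c2 tau) (c3 tau))
    by (repeat split; auto; [lra | apply (Rbar_lt_of_le tau t); lra || auto]).
  destruct (continuity_eq _ _ _ _ HD) as [ar [b1 [b2 [b3 [Har [Hb1 [Hb2 [Hb3 Hcont]]]]]]]].
  pose proof (entropy_eq _ _ _ _ HD) as Hent. cbv zeta in Hent.
  destruct Hent as [as_ [g1 [g2 [g3 [e1 [e2 [e3 [Has [Hg1 [Hg2 [Hg3 [He1 [He2 [He3 Hent]]]]]]]]]]]]]].
  destruct (C1_spatial_partials _ _ _ _ _ _ rho_C1 HD) as [r1 [r2 [r3 [Hr1 [Hr2 Hr3]]]]].
  destruct (C1_spatial_partials _ _ _ _ _ _ v1_C1 HD) as [q1 [_ [_ [Hq1 _]]]].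
  destruct (C1_spatial_partials _ _ _ _ _ _ v2_C1 HD) as [_ [q2 [_ [_ [Hq2 _]]]]].
  destruct (C1_spatial_partials _ _ _ _ _ _ v3_C1 HD) as [_ [_ [q3 [_ [_ Hq3]]]]].
  (* d_i (rho v^i) by the product rule, d_i vcheck^i = d_i v^i - c *)
  set (c := 2 / (3 * tau) - f0 tau / (3 * (1 + f tau))) in Hent, He1, He2, He3.
  assert (Eb1 := derive_unique _ _ _ _ Hb1 (is_derive_mult _ _ _ _ _ Hr1 Hq1 Rmult_comm)).
  assert (Eb2 := derive_unique _ _ _ _ Hb2 (is_derive_mult _ _ _ _ _ Hr2 Hq2 Rmult_comm)).
  assert (Eb3 := derive_unique _ _ _ _ Hb3 (is_derive_mult _ _ _ _ _ Hr3 Hq3 Rmult_comm)).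
  assert (Ee1 := derive_unique _ _ _ _ He1 (is_derive_minus_linear _ _ c _ Hq1)).
  assert (Ee2 := derive_unique _ _ _ _ He2 (is_derive_minus_linear _ _ c _ Hq2)).
  assert (Ee3 := derive_unique _ _ _ _ He3 (is_derive_minus_linear _ _ c _ Hq3)).
  assert (DS := chain_along_curve T t s c1 c2 c3 tau _ _ _ _ _ _ _ s_C1 HtT Htau Hnz Has Hg1 Hg2 Hg3 Hc1 Hc2 Hc3).
  assert (DR := chain_along_curve T t rho c1 c2 c3 tau _ _ _ _ _ _ _ rho_C1 HtT Htau Hnz Har Hr1 Hr2 Hr3 Hc1 Hc2 Hc3).
  assert (Htau0 : 0 < tau) by lra.
  assert (Dlnt := deriv_in_ln _ _ _ _ _ (deriv_in_id 1 t tau) Htau0).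
  assert (Df : is_deriv_in 1 (Finite t) (fun s => 1 + f s) tau (f0 tau)).
  { eapply deriv_in_ext; [intros; reflexivity | |exact (deriv_in_plus _ _ _ _ _ _ _ (deriv_in_const 1 t 1 tau) Hf)].
    ring. }
  assert (DF := deriv_in_minus _ _ _ _ _ _ _ (deriv_in_plus _ _ _ _ _ _ _ (deriv_in_minus _ _ _ _ _ _ _
    (deriv_in_minus _ _ _ _ _ _ _ DS (deriv_in_scal _ _ _ (2 / 3 + omega) _ _
       (deriv_in_ln _ _ _ _ _ DR (rho_pos _ _ _ _ HD))))
    (deriv_in_scal _ _ _ (2 * omega) _ _ Dlnt)) (deriv_in_scal _ _ _ omega _ _ (deriv_in_ln _ _ _ _ _ Df Hfpos)))
    (deriv_in_ln _ _ _ _ _ (deriv_in_nrm2 _ _ _ _ _ _ _ _ _ Hc1 Hc2 Hc3) (nrm2_pos _ _ _ Hnz))).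
  rewrite Eb1, Eb2, Eb3 in Hcont. rewrite Ee1, Ee2, Ee3 in Hent.
  eapply deriv_in_ext; [intros; reflexivity | | exact DF].
  eapply entropy_balance; [exact Htau0 | exact (rho_pos _ _ _ _ HD) | exact Hfpos | exact Hnz
                          | exact Hcont | exact Hent].
Qed.

Lemma entropy_defect_initial (beta k X : R) (c1 c2 c3 : R -> R) :
  0 < k -> 0 < X -> nrm2 (c1 1) (c2 1) (c3 1) <> 0 -> f 1 = beta ->
  rho 1 (c1 1) (c2 1) (c3 1) = k * X ->
  s 1 (c1 1) (c2 1) (c3 1) =
    ln (Rpower X (2 / 3 + omega) / Rpower (1 + beta) omega * nrm2 (c1 1) (c2 1) (c3 1)) ->
  entropy_defect c1 c2 c3 1 = - (2 / 3 + omega) * ln k.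
Proof.
  intros Hk HX Hnz Hf1 Hrho1 Hs1. pose proof (nrm2_pos _ _ _ Hnz).
  unfold entropy_defect. rewrite Hs1, Hrho1, Hf1, ln_1.
  rewrite ln_mult, ln_div, !ln_Rpower, ln_mult by (try apply Rdiv_lt_0_compat; try apply Rpower_pos; auto).
  ring.
Qed.

End Characteristics.

Lemma entropy_closed_form (sv t r rhoo k fv n omega : R) :
  0 < t -> 0 < r -> 0 < k -> 0 < 1 + fv -> 0 < n -> rhoo = k / t ^ 2 ->
  sv - (2 / 3 + omega) * ln r - 2 * omega * ln t + omega * ln (1 + fv) - ln n
    = - (2 / 3 + omega) * ln k ->
  sv = ln (Rpower t (- (4 / 3)) * Rpower (1 + (r / rhoo - 1)) (2 / 3 + omega)
           / Rpower (1 + fv) omega * n).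
Proof.
  intros Ht Hr Hk Hf Hn -> Hcons.
  replace (1 + (r / (k / t ^ 2) - 1)) with (r * t ^ 2 / k) by (field; lra).
  assert (Ht2 : 0 < t ^ 2) by (apply pow_lt; lra).
  assert (Hpos := Rpower_pos).
  rewrite ln_mult, ln_div, ln_mult, !ln_Rpower by
    (repeat apply Rdiv_lt_0_compat; repeat apply Rmult_lt_0_compat; auto).
  rewrite ln_div, ln_mult, ln_pow by (auto; apply Rmult_lt_0_compat; auto).
  replace (INR 2) with 2 by (simpl; ring). lra.
Qed.

Theorem lemmat
  (beta gamma K iota omega : R) (tm T : Rbar) (f f0 : R -> R) (d : R -> R)
  (rho v1 v2 v3 s : field) :
  0 < beta -> 0 < gamma -> 0 < K -> 0 < iota < 1 ->
  (forall r, 0 < r -> 0 < 1 + beta * d r) ->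
  ode_maximal tm beta gamma f f0 ->
  Rbar_lt (Finite 1) T -> Rbar_le T tm ->
  (* regularity and positivity *)
  C1_on_D T rho -> C1_on_D T v1 -> C1_on_D T v2 -> C1_on_D T v3 -> C1_on_D T s ->
  (forall t x1 x2 x3, inD T t x1 x2 x3 -> 0 < rho t x1 x2 x3) ->
  (* continuity equation  d_t rho + d_i (rho v^i) = 0 *)
  (forall t x1 x2 x3, inD T t x1 x2 x3 ->
     exists a b1 b2 b3,
       pd_t rho t x1 x2 x3 a /\
       pd_1 (fun t y1 y2 y3 => rho t y1 y2 y3 * v1 t y1 y2 y3) t x1 x2 x3 b1 /\
       pd_2 (fun t y1 y2 y3 => rho t y1 y2 y3 * v2 t y1 y2 y3) t x1 x2 x3 b2 /\
       pd_3 (fun t y1 y2 y3 => rho t y1 y2 y3 * v3 t y1 y2 y3) t x1 x2 x3 b3 /\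
       a + b1 + b2 + b3 = 0) ->
  (forall x1 x2 x3, nrm2 x1 x2 x3 <> 0 ->
     rho 1 x1 x2 x3 = iota ^ 3 / (6 * PI) * (1 + beta * d (sqrt (nrm2 x1 x2 x3)))) ->
  (* transport equation for s, with vcheck^i = v^i - (2/(3t) - f0/(3(1+f))) x^i *)
  (let c t := 2 / (3 * t) - f0 t / (3 * (1 + f t)) in
   let vc1 : field := fun t y1 y2 y3 => v1 t y1 y2 y3 - c t * y1 in
   let vc2 : field := fun t y1 y2 y3 => v2 t y1 y2 y3 - c t * y2 in
   let vc3 : field := fun t y1 y2 y3 => v3 t y1 y2 y3 - c t * y3 in
   forall t x1 x2 x3, inD T t x1 x2 x3 ->
     exists a c1 c2 c3 e1 e2 e3,
       pd_t s t x1 x2 x3 a /\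
       pd_1 s t x1 x2 x3 c1 /\ pd_2 s t x1 x2 x3 c2 /\ pd_3 s t x1 x2 x3 c3 /\
       pd_1 vc1 t x1 x2 x3 e1 /\ pd_2 vc2 t x1 x2 x3 e2 /\ pd_3 vc3 t x1 x2 x3 e3 /\
       a + (v1 t x1 x2 x3 * c1 + v2 t x1 x2 x3 * c2 + v3 t x1 x2 x3 * c3)
       = - (2 / 3 + omega) * (e1 + e2 + e3)
         + 2 * (vc1 t x1 x2 x3 * x1 + vc2 t x1 x2 x3 * x2 + vc3 t x1 x2 x3 * x3)
             / nrm2 x1 x2 x3) ->
  (forall x1 x2 x3, nrm2 x1 x2 x3 <> 0 ->
     s 1 x1 x2 x3 =
       ln (Rpower (1 + beta * d (sqrt (nrm2 x1 x2 x3))) (2 / 3 + omega)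
           / Rpower (1 + beta) omega * nrm2 x1 x2 x3)) ->
  (* every point lies on an integral curve of d_t + v^i d_i starting at t = 1 *)
  (forall t x1 x2 x3, inD T t x1 x2 x3 ->
     exists c1 c2 c3 : R -> R,
       (forall tau, 1 <= tau <= t ->
          nrm2 (c1 tau) (c2 tau) (c3 tau) <> 0 /\
          is_deriv_in 1 (Finite t) c1 tau (v1 tau (c1 tau) (c2 tau) (c3 tau)) /\
          is_deriv_in 1 (Finite t) c2 tau (v2 tau (c1 tau) (c2 tau) (c3 tau)) /\
          is_deriv_in 1 (Finite t) c3 tau (v3 tau (c1 tau) (c2 tau) (c3 tau))) /\
       c1 t = x1 /\ c2 t = x2 /\ c3 t = x3) ->
  (* conclusion *)
  forall t x1 x2 x3, inD T t x1 x2 x3 ->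
    let rhoo := iota ^ 3 / (6 * PI * t ^ 2) in
    let vrho := rho t x1 x2 x3 / rhoo - 1 in
    s t x1 x2 x3 =
      ln (Rpower t (- (4 / 3)) * Rpower (1 + vrho) (2 / 3 + omega)
          / Rpower (1 + f t) omega * nrm2 x1 x2 x3) /\
    K * exp (s t x1 x2 x3) * Rpower (rho t x1 x2 x3) (4 / 3) =
      K * Rpower t (- (4 / 3)) * Rpower (1 + vrho) (2 / 3 + omega)
        / Rpower (1 + f t) omega * nrm2 x1 x2 x3 * Rpower (rho t x1 x2 x3) (4 / 3).
Proof.
  intros Hbeta _ _ Hiota Hd [Hsol _] _ HTtm HCrho HCv1 HCv2 HCv3 HCs Hrho_pos Hcont Hrho1
    Hentropy Hs1 Hcurve t x1 x2 x3 HD rhoo vrho.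
  destruct (Hcurve t x1 x2 x3 HD) as [c1 [c2 [c3 [Hc [E1 [E2 E3]]]]]].
  subst x1 x2 x3. destruct HD as [Ht1 [HtT Hnz]].
  assert (Httm : Rbar_lt (Finite t) tm) by exact (Rbar_lt_le_trans _ _ _ HtT HTtm).
  assert (Hfpos := ode_one_plus_f_pos _ _ _ _ _ _ Hsol Hbeta Ht1 Httm).
  destruct (Hc 1 ltac:(lra)) as [Hnz1 _].
  set (k := iota ^ 3 / (6 * PI)).
  assert (Hk : 0 < k) by (apply Rdiv_lt_0_compat; [apply pow_lt | pose proof PI_RGT_0]; lra).
  (* the defect is constant along the characteristic through (t, x) ... *)
  assert (Hconst : entropy_defect omega f rho s c1 c2 c3 t = entropy_defect omega f rho s c1 c2 c3 1).
  { apply deriv_in_zero_const; [lra|]. intros tau Htau.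
    destruct (Hc tau Htau) as [Hnz' [D1 [D2 D3]]].
    exact (entropy_defect_stationary omega T f f0 rho v1 v2 v3 s HCrho HCv1 HCv2 HCv3 HCs
      Hrho_pos Hcont Hentropy t c1 c2 c3 tau HtT Htau Hnz' D1 D2 D3
      (ode_f_deriv _ _ _ _ _ _ _ Hsol Httm Htau) (Hfpos tau Htau)). }
  (* ... and its value at t = 1 is fixed by the initial data *)
  assert (HX : 0 < 1 + beta * d (sqrt (nrm2 (c1 1) (c2 1) (c3 1))))
    by (apply Hd, sqrt_lt_R0, nrm2_pos; auto).
  assert (Hf1 : f 1 = beta) by (destruct Hsol as [? [_ [_ [? _]]]]; auto).
  rewrite (entropy_defect_initial omega f rho s beta k _ c1 c2 c3 Hk HX Hnz1 Hf1
    (Hrho1 _ _ _ Hnz1) (Hs1 _ _ _ Hnz1)) in Hconst.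
  assert (Hs : s t (c1 t) (c2 t) (c3 t) =
    ln (Rpower t (- (4 / 3)) * Rpower (1 + vrho) (2 / 3 + omega) / Rpower (1 + f t) omega
        * nrm2 (c1 t) (c2 t) (c3 t))).
  { apply (entropy_closed_form _ t _ rhoo k); [lra | | exact Hk | apply Hfpos; lra
      | apply nrm2_pos; exact Hnz | | exact Hconst].
    - apply Hrho_pos. repeat split; auto.
    - unfold rhoo, k. field. pose proof PI_RGT_0. split; lra. }
  split; [exact Hs |].
  rewrite Hs, exp_ln; [unfold Rdiv; ring |].
  apply Rmult_lt_0_compat; [apply Rdiv_lt_0_compat; [apply Rmult_lt_0_compat|] | apply nrm2_pos; auto];
    apply Rpower_pos.
Qed.
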